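(* Let $p$ be a prime with $p\equiv\pm3\pmod 8$, $q=p^s$, let $m$ be an integer with $2^m\mid(q-1)$ and $m\ge 3$ if $p\equiv 3\pmod 8$, $m\ge 2$ if $p\equiv -3\pmod 8$, and let $\lambda$ be a multiplicative character of order $2^m$ on $\mathbb F_q$. For $1\le r\le m$, $0\le t\le m$ and odd integer $c_0$ put $$W_{r,t}(c_0)=\sum_{\substack{j_0=1\\ 2\nmid j_0}}^{2^r-1}G(\lambda^{2^{m-r}j_0})\,\zeta_{2^{m-t}}^{2^{m-r}c_0j_0}.$$ Then $$W_{1,t}(c_0)=\begin{cases}-G(\eta)&\text{if } t=0,\\ G(\eta)&\text{if } t\ge 1,\end{cases}\qquad W_{2,t}(c_0)=\begin{cases}G(\lambda^{2^{m-2}})+G(\bar\lambda^{2^{m-2}})&\text{if } t\ge 2,\\ -\bigl(G(\lambda^{2^{m-2}})+G(\bar\lambda^{2^{m-2}})\bigr)&\text{if } t=1,\\ i^{c_0}\bigl(G(\lambda^{2^{m-2}})-G(\bar\lambda^{2^{m-2}})\bigr)&\text{if } t=0,\end{cases}$$ and, for $3\le r\le m$, $$W_{r,t}(c_0)=\begin{cases} 2^{r-2}\bigl(G(\lambda^{2^{m-r}})+G(\bar\lambda^{2^{m-r}})\bigr)&\text{if } r\le t,\\ -2^{r-2}\bigl(G(\lambda^{2^{m-r}})+G(\bar\lambda^{2^{m-r}})\bigr)&\text{if } r=t+1,\\ 2^{r-2} i^{c_0}\bigl(G(\lambda^{2^{m-r}})-G(\bar\lambda^{2^{m-r}})\bigr)&\text{if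 } r=t+2 \text{ and } p\equiv -3\pmod{8},\\ 2^{r-3} i\sqrt{2}\,\bigl(G(\lambda^{2^{m-r}})-G(\bar\lambda^{2^{m-r}})\bigr)&\text{if } r=t+3,\ p\equiv 3\pmod{8},\ c_0\equiv 1\text{ or }3\pmod{8},\\ -2^{r-3} i\sqrt{2}\,\bigl(G(\lambda^{2^{m-r}})-G(\bar\lambda^{2^{m-r}})\bigr)&\text{if } r=t+3,\ p\equiv 3\pmod{8},\ c_0\equiv 5\text{ or }7\pmod{8},\\ 0&\text{otherwise.} \end{cases}$$
   Context: Multiplicative characters are extended by $\psi(0)=0$; $\bar\lambda$ is the complex conjugate (inverse) character; $\eta$ is the quadratic character of $\mathbb F_q$; $\zeta_k=e^{2\pi i/k}$, $i=\sqrt{-1}$. The Gauss sum of a nontrivial character $\psi$ on $\mathbb F_q$ is $G(\psi)=\sum_{x\in\mathbb F_q}\psi(x)\zeta_p^{\mathrm{Tr}(x)}$, with $\mathrm{Tr}$ the trace from $\mathbb F_q$ to $\mathbb F_p$. *)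

From HB Require Import structures.
From mathcomp Require Import all_boot all_order all_algebra all_field.
Set Implicit Arguments. Unset Strict Implicit. Unset Printing Implicit Defensive.
Import Order.TTheory GRing.Theory Num.Theory.
Local Open Scope ring_scope.

(* zeta_k = e^{2 pi i / k}: k.-root (-1) is e^{i pi/k} (root of -1 with minimal
   nonnegative argument), so its square is e^{2 pi i/k}. *)
Definition zeta (k : nat) : algC := (k.-root (-1)) ^+ 2.

Definition is_mchar (F : finFieldType) (psi : F -> algC) : Prop :=
  [/\ psi 0 = 0, psi 1 = 1 & forall x y, psi (x * y) = psi x * psi y].

Definition mchar_order (F : finFieldType) (psi : F -> algC) (n : nat) : Prop :=
  [/\ is_mchar psi, (0 < n)%N,
      (forall x : F, x != 0 -> psi x ^+ n = 1) &
      (forall d : nat, (0 < d < n)%N -> exists2 x : F, x != 0 & psi x ^+ d != 1)].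

Definition mchar_pow (F : finFieldType) (psi : F -> algC) (k : nat) : F -> algC :=
  fun x => if x == 0 then 0 else psi x ^+ k.

Definition mchar_conj (F : finFieldType) (psi : F -> algC) : F -> algC :=
  fun x => (psi x)^*.

Definition quad_char (F : finFieldType) : F -> algC :=
  fun x => if x == 0 then 0 else if [exists y : F, y ^+ 2 == x] then 1 else -1.

Definition trF (F : finFieldType) (p s : nat) (x : F) : F :=
  \sum_(k < s) x ^+ (p ^ k).

Definition trN (F : finFieldType) (p s : nat) (x : F) : nat :=
  if [pick k : 'I_p | (k%:R : F) == trF p s x] is Some k then val k else 0%N.

Definition gauss (F : finFieldType) (p s : nat) (psi : F -> algC) : algC :=
  \sum_(x : F) psi x * zeta p ^+ trN p s x.

Definition Wsum (F : finFieldType) (p s m : nat) (lam : F -> algC)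
    (r t : nat) (c0 : int) : algC :=
  \sum_(j0 < 2 ^ r | odd j0)
     gauss p s (mchar_pow lam (2 ^ (m - r) * j0)) *
     zeta (2 ^ (m - t)) ^ (((2 ^ (m - r) * j0)%:Z) * c0).

From HB Require Import structures.
From mathcomp Require Import all_boot all_order all_algebra all_field.
From mathcomp Require Import ring zify.

(* Frobenius invariance gives G(psi^(k p)) = G(psi^k), and for p = +-3 (mod 8)
   the powers of p and their negatives exhaust the odd residues modulo 2^r.
   Hence for odd j and r >= 3 the Gauss sum G(lambda^(2^(m-r) j)) is
   G(lambda^(2^(m-r))) when j = 1 or p (mod 8), and G(lambda-bar^(2^(m-r)))
   otherwise.  Grouping the indices j of W_{r,t} by their residue mod 8 writes
   it as a geometric sum in u^8, u = zeta_{2^(r-t)}^c0, times an eight-term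
   block; the block is evaluated from u = +-1, u^2 = -1 or u^4 = -1, and the
   geometric sum vanishes once r >= t + 4.  For r = 1 the single Gauss sum is
   that of the quadratic character, because lambda^(2^(m-1)) is trivial
   exactly on the nonzero squares, which form a subgroup of index 2. *)

Set Implicit Arguments.
Unset Strict Implicit.
Unset Printing Implicit Defensive.

Import Order.TTheory GRing.Theory Num.Theory.
Local Open Scope ring_scope.

(** * Roots of unity in algC *)

Lemma normC_exprn_eq1 (z : algC) n : (0 < n)%N -> `|z ^+ n| = 1 -> `|z| = 1.
Proof. by move=> n_gt0; rewrite normrX => /eqP; rewrite pexpr_eq1 // => /eqP. Qed.

Lemma Re_le_root_neg1 (z : algC) n : ~~ odd n -> (0 < n)%N ->
  z ^+ n = -1 -> 0 <= 'Im z -> `|'Re z| <= 'Re (n.-root (-1)).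
Proof.
move=> n_even n_gt0 zn Im_z; rewrite real_ler_norml ?Creal_Re // andbC.
rewrite rootC_Re_max //= lerNl.
have zcn : (- z^*) ^+ n = -1.
  by rewrite exprNn -signr_odd (negbTE n_even) mul1r -rmorphXn zn rmorphN1.
by have := rootC_Re_max n_gt0 zcn; rewrite !raddfN /= Re_conj Im_conj opprK; apply.
Qed.

Lemma Re_root_neg1_ge0 n : ~~ odd n -> (0 < n)%N -> 0 <= 'Re (n.-root (-1 : algC)).
Proof.
move=> n_even n_gt0; apply: le_trans (normr_ge0 _) _.
apply: Re_le_root_neg1 => //; first exact: rootCK.
by apply: Im_rootC_ge0; case: n n_gt0 n_even => [|[]].
Qed.

Lemma Re_sqr_norm1 (z : algC) : `|z| = 1 -> 'Re (z ^+ 2) = 2 * 'Re z ^+ 2 - 1.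
Proof.
move=> z1; have e := normC2_Re_Im z; rewrite z1 expr1n in e.
rewrite expr2 ReM -!expr2.
have -> : 'Im z ^+ 2 = 1 - 'Re z ^+ 2 by rewrite e; ring.
ring.
Qed.

Lemma norm1_eq_Re (a b : algC) : `|a| = 1 -> `|b| = 1 ->
  0 <= 'Im a -> 0 <= 'Im b -> 'Re a = 'Re b -> a = b.
Proof.
move=> a1 b1 Ia Ib eRe; rewrite [a]Crect [b]Crect eRe; congr (_ + 'i * _).
have : 'Im a ^+ 2 = 'Im b ^+ 2.
  by apply: (@addrI _ ('Re b ^+ 2)); rewrite -{1}eRe -!normC2_Re_Im a1 b1.
by move/eqP; rewrite eqrXn2 // => /eqP.
Qed.

(* Both sides are roots of X^n = -1 with nonnegative imaginary part, and
   n.-root (-1) is the one with the largest real part; comparing with the square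
   of sqrtC (n.-root (-1)) shows that the left side has that real part too. *)
Lemma zeta_double n : (0 < n)%N -> zeta (2 * n) = n.-root (-1).
Proof.
rewrite /zeta => n_gt0; set y := (2 * n).-root _; set v := n.-root _.
have n2_gt0 : (0 < 2 * n)%N by rewrite muln_gt0.
have n2_even : ~~ odd (2 * n) by rewrite oddM.
have yn : y ^+ (2 * n) = -1 by apply: rootCK.
have vn : v ^+ n = -1 by apply: rootCK.
have y2n : (y ^+ 2) ^+ n = -1 by rewrite -exprM.
have norm1 (z : algC) k : (0 < k)%N -> z ^+ k = -1 -> `|z| = 1.
  by move=> k_gt0 zk; apply: (normC_exprn_eq1 k_gt0); rewrite zk normrN1.
have Im_y : 0 <= 'Im y.
  by apply: Im_rootC_ge0; move: n_gt0; clear; case: n => // n _; rewrite mulnS ltn_addr.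
have Im_y2 : 0 <= 'Im (y ^+ 2).
  by rewrite expr2 ImM addr_ge0 // mulr_ge0 // Re_root_neg1_ge0.
have Im_v : 0 <= 'Im v.
  have [n_gt1|n_le1] := ltnP 1 n; first exact: Im_rootC_ge0.
  rewrite /v (_ : n = 1%N); last by apply/eqP; rewrite eqn_leq n_le1.
  by rewrite root1C raddfN /= (Creal_ImP _ _) ?rpred1 ?oppr0.
apply: norm1_eq_Re => //; [exact: norm1 y2n | exact: norm1 vn |].
apply/le_anti; rewrite rootC_Re_max //=.
set u := sqrtC v.
have u2n : u ^+ (2 * n) = -1 by rewrite exprM sqrtCK.
have Re_u : `|'Re u| <= 'Re y by apply: Re_le_root_neg1 => //; apply: Im_rootC_ge0.
rewrite -[v](sqrtCK v) -/u !Re_sqr_norm1; last 2 first.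
- exact: norm1 yn.
- exact: norm1 u2n.
rewrite lerD2r ler_pM2l ?ltr0n // -(real_normK (Creal_Re u)) -(real_normK (Creal_Re y)).
rewrite ler_sqr ?nnegrE ?normr_ge0 //.
exact: le_trans Re_u (real_ler_norm (Creal_Re y)).
Qed.

Lemma zeta_sqr n : (0 < n)%N -> zeta (2 * n) ^+ 2 = zeta n.
Proof. by move=> n_gt0; rewrite zeta_double. Qed.

Lemma zetaXn n : (0 < n)%N -> zeta n ^+ n = 1.
Proof. by move=> n_gt0; rewrite -exprM mulnC exprM rootCK // sqrrN expr1n. Qed.

Lemma zeta_pow2 a b : zeta (2 ^ (a + b)) ^+ (2 ^ b) = zeta (2 ^ a).
Proof.
elim: b => [|b IHb]; first by rewrite addn0 expn0 expr1.
by rewrite addnS !expnS exprM zeta_sqr ?expn_gt0.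
Qed.

Lemma zeta_pow2_eq1 a b : (a <= b)%N -> zeta (2 ^ a) ^+ (2 ^ b) = 1.
Proof.
by move=> le_ab; rewrite -(subnKC le_ab) expnD exprM zetaXn ?expn_gt0 // expr1n.
Qed.

Lemma zeta2 : zeta 2 = -1.
Proof. by rewrite (@zeta_double 1) ?root1C. Qed.

Lemma zeta4 : zeta 4 = 'i.
Proof. by rewrite (@zeta_double 2) // imaginaryCE. Qed.

Lemma exprzACn (R : unitRingType) (x : R) (c : int) k : (x ^ c) ^+ k = (x ^+ k) ^ c.
Proof. exact: (exprzAC x c k). Qed.

Lemma exprz_natMz (R : unitRingType) (x : R) a b (c : int) :
  x ^ ((a * b)%N%:Z * c) = ((x ^+ a) ^ c) ^+ b.
Proof. by rewrite -exprz_exp -[x ^ _]/(x ^+ (a * b)) exprM exprzACn. Qed.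

Lemma expN1z_odd (R : numDomainType) (c : int) : odd `|c| -> (-1 : R) ^ c = -1.
Proof. by move=> c_odd; rewrite expN1r -signr_odd c_odd. Qed.

Lemma exprz_modn (R : comUnitRingType) (x : R) (c : int) n : (0 < n)%N -> x ^+ n = 1 ->
  x ^ c = x ^+ `|(c %% n%:Z)%Z|.
Proof.
move=> n_gt0 xn1; have x_unit : x \is a GRing.unit.
  by rewrite -(unitrX_pos x n_gt0) xn1 unitr1.
have n_neq0 : n%:Z != 0 by rewrite eqz_nat -lt0n.
rewrite {1}(divz_eq c n%:Z) exprzDr // mulrC -exprz_exp exprzAC.
by rewrite -[x ^ n%:Z]/(x ^+ n) xn1 exp1rz mulr1 -{1}(gez0_abs (modz_ge0 c n_neq0)).
Qed.

Lemma zeta_pow2_odd k (c : int) : odd `|c| -> (zeta (2 ^ k.+1) ^ c) ^+ (2 ^ k) = -1.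
Proof.
by move=> c_odd; rewrite exprzACn -[k.+1]add1n zeta_pow2 zeta2 expN1z_odd.
Qed.

Lemma zeta8_add3 : zeta 8 + zeta 8 ^+ 3 = 'i * sqrtC 2.
Proof.
have z2 : zeta 8 ^+ 2 = 'i by rewrite (@zeta_sqr 4) ?zeta4.
have -> : zeta 8 + zeta 8 ^+ 3 = zeta 8 * (1 + 'i) by rewrite -z2; ring.
set x := zeta 8 * _.
have x2 : x ^+ 2 = - 2.
  rewrite exprMn z2; transitivity (2 * 'i ^+ 2 + 'i * (1 + 'i ^+ 2) : algC); first ring.
  by rewrite sqrCi; ring.
have -> : 'i * sqrtC 2 = sqrtC (x ^+ 2).
  by rewrite x2 -mulN1r rootCMr ?ler0n // imaginaryCE.
apply/esym/sqrCK_P/andP; split.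
  rewrite /x mulrDr mulr1 raddfD /= ImMir (@zeta_double 4) //.
  by rewrite addr_ge0 ?Im_rootC_ge0 ?Re_root_neg1_ge0.
apply/negP => x_lt0; have := exprn_ge0 2 (normr_ge0 x).
by rewrite real_normK ?ltr0_real // x2 oppr_ge0 lern0.
Qed.

Lemma expr_sqr_neg1 (R : pzRingType) (x : R) : x ^+ 2 = -1 ->
  [/\ x ^+ 3 = - x, x ^+ 5 = x, x ^+ 7 = - x & x ^+ 8 = 1].
Proof.
move=> x2; have x4 : x ^+ 4 = 1 by rewrite (exprM x 2 2) x2 sqrrN expr1n.
split; first by rewrite exprS x2 mulrN1.
- by rewrite (exprD x 4 1) x4 mul1r.
- by rewrite (exprD x 4 3) x4 mul1r exprS x2 mulrN1.
- by rewrite (exprM x 4 2) x4 expr1n.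
Qed.

Lemma expr_fourth_neg1 (R : pzRingType) (x : R) : x ^+ 4 = -1 ->
  [/\ x ^+ 5 = - x, x ^+ 7 = - x ^+ 3 & x ^+ 8 = 1].
Proof.
move=> x4; split; first by rewrite (exprD x 4 1) x4 mulN1r.
- by rewrite (exprD x 4 3) x4 mulN1r.
- by rewrite (exprM x 4 2) x4 sqrrN expr1n.
Qed.

Lemma zeta8_odd_add3 (c : int) : odd `|c| ->
  zeta 8 ^ c + (zeta 8 ^ c) ^+ 3 =
  if (c %% 8)%Z \in [:: 1%Z; 3%Z] then 'i * sqrtC 2 else - ('i * sqrtC 2).
Proof.
move=> c_odd; have z8 : zeta 8 ^+ 8 = 1 by rewrite zetaXn.
have c2 : (`|c| %% 2 = 1)%N by rewrite modn2 c_odd.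
have : (c %% 8 = 1 \/ c %% 8 = 3 \/ c %% 8 = 5 \/ c %% 8 = 7)%Z by clear -c2; lia.
rewrite (exprz_modn _ _ z8) //; set z := zeta 8 in z8 *.
have z4 : z ^+ 4 = -1 by rewrite (@zeta_pow2_odd 2 1) ?expr1z.
have [z5 z7 _] := expr_fourth_neg1 z4.
have z9 : (z ^+ 3) ^+ 3 = z by rewrite -exprM (exprD z 8 1) z8 mul1r.
have z_add3 : z + z ^+ 3 = 'i * sqrtC 2 := zeta8_add3.
case=> [|[|[]]] ->; rewrite !inE /=.
- by rewrite expr1.
- by rewrite z9 addrC.
- by rewrite z5 -z_add3; ring.
- have nz9 : (- z ^+ 3) ^+ 3 = - z by rewrite -[X in _ = - X]z9; ring.
  by rewrite z7 nz9 -z_add3; ring.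
Qed.

Lemma sumr_expr1 (R : pzSemiRingType) (x : R) n : x = 1 -> \sum_(l < n) x ^+ l = n%:R.
Proof.
by move=> ->; rewrite (eq_bigr (fun=> 1)) ?sumr_const ?card_ord // => l _; rewrite expr1n.
Qed.

Lemma sumr_expr_eq0 (R : idomainType) (x : R) n : x != 1 -> x ^+ n = 1 ->
  \sum_(l < n) x ^+ l = 0.
Proof.
move=> x_neq1 xn1; have := subrX1 x n; rewrite xn1 subrr => /esym/eqP.
by rewrite mulf_eq0 subr_eq0 (negbTE x_neq1) => /eqP.
Qed.

Lemma sum_expr_mod (R : comPzSemiRingType) n d (a : nat -> R) (u : R) :
  \sum_(j < n * d) a (j %% d)%N * u ^+ j =
  (\sum_(l < n) (u ^+ d) ^+ l) * \sum_(k < d) a k * u ^+ k.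
Proof.
elim: n => [|n IHn]; first by rewrite mul0n !big_ord0 mul0r.
rewrite mulSnr big_split_ord /= IHn big_ord_recr /= mulrDl; congr (_ + _).
rewrite mulr_sumr; apply: eq_bigr => k _.
by rewrite modnMDl modn_small // exprD mulnC exprM mulrCA.
Qed.

(** * Gauss sums of powers of a character *)

Lemma mcharX (F : finFieldType) (psi : F -> algC) x n :
  is_mchar psi -> psi (x ^+ n) = psi x ^+ n.
Proof.
case=> _ psi1 psiM; elim: n => [|n IHn]; first by rewrite !expr0.
by rewrite !exprS psiM IHn.
Qed.

Lemma mchar_conjP (F : finFieldType) (psi : F -> algC) :
  is_mchar psi -> is_mchar (mchar_conj psi).
Proof.
case=> psi0 psi1 psiM; split; rewrite /mchar_conj ?psi0 ?psi1 ?rmorph0 ?rmorph1 //.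
by move=> x y; rewrite psiM rmorphM.
Qed.

Lemma eq_gauss (F : finFieldType) p s (f g : F -> algC) : f =1 g -> gauss p s f = gauss p s g.
Proof. by move=> eq_fg; apply: eq_bigr => x _; rewrite eq_fg. Qed.

Section Frobenius.

Variables (F : finFieldType) (p s : nat).
Hypotheses (cardF : #|F| = (p ^ s)%N) (p_gt0 : (0 < p)%N).

Lemma deg_gt0 : (0 < s)%N.
Proof. by have := finNzRing_gt1 F; rewrite cardF; case: s => //; rewrite expn0. Qed.

Lemma trF_frobenius (x : F) : trF p s (x ^+ p) = trF p s x.
Proof.
rewrite /trF; case: s cardF deg_gt0 => // s' cardF' _.
rewrite big_ord_recr big_ord_recl /= expn0 expr1.
rewrite -exprM -expnS -cardF' expf_card addrC; congr (_ + _).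
by apply: eq_bigr => i _; rewrite -exprM -expnS.
Qed.

Lemma frobenius_inj : injective (fun x : F => x ^+ p).
Proof.
apply: (can_inj (g := fun x : F => x ^+ (p ^ s.-1))) => x.
by rewrite -exprM -expnS prednK ?deg_gt0 // -cardF expf_card.
Qed.

Lemma gauss_pow_frobenius (psi : F -> algC) k : is_mchar psi ->
  gauss p s (mchar_pow psi (k * p)) = gauss p s (mchar_pow psi k).
Proof.
move=> psi_mchar; rewrite /gauss [RHS](reindex_inj frobenius_inj) /=.
apply: eq_bigr => x _; rewrite /trN trF_frobenius; congr (_ * _).
rewrite /mchar_pow expf_eq0 p_gt0 /=; case: ifP => // _.
by rewrite mcharX // -exprM mulnC.
Qed.

Lemma gauss_pow_frobeniusX (psi : F -> algC) k a : is_mchar psi ->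
  gauss p s (mchar_pow psi (k * p ^ a)) = gauss p s (mchar_pow psi k).
Proof.
move=> psi_mchar; elim: a => [|a IHa]; first by rewrite expn0 muln1.
by rewrite expnSr mulnA gauss_pow_frobenius.
Qed.

End Frobenius.

Section CharacterPowers.

Variables (F : finFieldType) (p s m : nat) (lam : F -> algC).
Hypothesis lam_order : mchar_order lam (2 ^ m).

Lemma mchar_order_mchar : is_mchar lam.
Proof. by case: lam_order. Qed.

Lemma mchar_order_unity x : x != 0 -> lam x ^+ (2 ^ m) = 1.
Proof. by case: lam_order => _ _ + _; apply. Qed.

Lemma gauss_pow_modn k k' : k = k' %[mod 2 ^ m] ->
  gauss p s (mchar_pow lam k) = gauss p s (mchar_pow lam k').
Proof.
move=> eq_kk'; apply: eq_gauss => x; rewrite /mchar_pow; case: ifP => // /negbT x_neq0.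
by rewrite -(expr_mod k (mchar_order_unity x_neq0)) eq_kk' expr_mod ?(mchar_order_unity x_neq0).
Qed.

Lemma gauss_pow_conj k k' : k + k' = 0 %[mod 2 ^ m] ->
  gauss p s (mchar_pow lam k) = gauss p s (mchar_pow (mchar_conj lam) k').
Proof.
move=> kk'_eq0; apply: eq_gauss => x; rewrite /mchar_pow /mchar_conj.
case: ifP => // /negbT x_neq0; set w := lam x ^+ k'.
have lam_k_w : lam x ^+ k * w = 1.
  by rewrite -exprD -(expr_mod _ (mchar_order_unity x_neq0)) kk'_eq0 mod0n.
have norm_lam : `|lam x| = 1.
  by apply: (@normC_exprn_eq1 _ (2 ^ m)); rewrite ?expn_gt0 ?mchar_order_unity ?normr1.
have w_conj : w * w^* = 1 by rewrite -normCK normrX norm_lam !expr1n.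
by rewrite -rmorphXn -/w -[lam x ^+ k]mulr1 -w_conj mulrA lam_k_w mul1r.
Qed.

End CharacterPowers.

(** * Powers of p modulo powers of 2 *)

Lemma eqn_mod_dvdz (d m n : nat) : (m == n %[mod d])%N = (d%:Z %| m%:Z - n%:Z)%Z.
Proof. by rewrite -eqz_nat -!modz_nat eqz_mod_dvd. Qed.

Section PowersModTwoPower.

Variable p : nat.
Hypothesis p_mod8 : (p %% 8 = 3 \/ p %% 8 = 5)%N.

Definition pow_class8 (j : nat) := (j %% 8 == 1)%N || (j %% 8 == p %% 8)%N.

Lemma expn_pow2_sub1 k : (0 < k)%N ->
  exists q, (p ^ (2 ^ k) = 1 + 2 ^ (k + 2) * (1 + 2 * q))%N.
Proof.
elim: k => // -[_ _ | k IHk _].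
  have p_eq := divn_eq p 8; move: (p %/ 8)%N p_eq => a ->.
  case: p_mod8 => ->; [exists (4 * a ^ 2 + 3 * a)%N | exists (4 * a ^ 2 + 5 * a + 1)%N]; ring.
have [q p_q] := IHk isT; exists (q + 2 ^ k.+1 * (1 + 2 * q) ^ 2)%N.
rewrite expnS mulnC expnM p_q !expnD (expnS 2 k.+1); move: (2 ^ k.+1)%N => T; ring.
Qed.

Lemma pow_congr_mod2X r j : (3 <= r)%N -> pow_class8 j ->
  exists a, (p ^ a = j %[mod 2 ^ r])%N.
Proof.
move=> r_ge3 j_cls.
suff [a p_a] : exists a, ((2 ^ r)%N%:Z %| (p ^ a)%N%:Z - j%:Z)%Z.
  by exists a; apply/eqP; rewrite eqn_mod_dvdz.
elim: r r_ge3 => // r IHr; rewrite ltnS leq_eqVlt => /orP[/eqP r2 | r_ge3].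
  rewrite -r2; have j_eq := divn_eq j 8; have p_eq := divn_eq p 8.
  case/orP: j_cls => /eqP j8; rewrite j8 in j_eq.
    by exists 0%N; apply/dvdzP; exists (- (j %/ 8)%N%:Z); rewrite [in RHS]j_eq; lia.
  exists 1%N; apply/dvdzP; exists ((p %/ 8)%N%:Z - (j %/ 8)%N%:Z).
  by rewrite [in RHS]j_eq {1}p_eq; lia.
have [a /dvdzP[c p_a]] := IHr r_ge3.
have [c_even | c_odd] := boolP (2 %| c)%Z.
  have [c' c_eq] := dvdzP c_even.
  by exists a; apply/dvdzP; exists c'; rewrite p_a c_eq expnS PoszM; ring.
(* Otherwise p^a = j + 2^r (mod 2^(r+1)), and multiplying by
   p^(2^(r-2)) = 1 + 2^r (mod 2^(r+1)) removes the extra 2^r. *)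
have [|q p_e] := @expn_pow2_sub1 (r - 2); first by rewrite subn_gt0.
rewrite (_ : (r - 2 + 2 = r)%N) in p_e; last by lia.
exists (a + 2 ^ (r - 2))%N; apply/dvdzP.
have p_odd : odd p by rewrite -(odd_mod p (d := 8)) //; case: p_mod8 => ->.
have p_a_odd : odd (p ^ a) by rewrite oddX p_odd orbT.
have [u pa_u] : exists u, (p ^ a = 2 * u + 1)%N.
  by exists (p ^ a)./2; rewrite -{1}(odd_double_half (p ^ a)) p_a_odd -muln2 mulnC addnC.
have [c' c_eq] : exists c', c = 2 * c' + 1.
  by exists (c %/ 2)%Z; move: c_odd; clear; lia.
exists (u%:Z + q%:Z + 2 * u%:Z * q%:Z + c' + 1).
have j_eq : j%:Z = (p ^ a)%N%:Z - c * (2 ^ r)%N%:Z by rewrite -p_a; ring.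
rewrite j_eq expnD p_e c_eq pa_u expnS !PoszD !PoszM; ring.
Qed.

Lemma pow_congr_opp_mod2X r j : (3 <= r)%N -> odd j -> ~~ pow_class8 j ->
  exists a, (p ^ a + j = 0 %[mod 2 ^ r])%N.
Proof.
move=> r_ge3 j_odd j_ncls; set j' := ((2 ^ r).-1 * j)%N.
(* j' = -j (mod 2^r) lies in the other residue class mod 8. *)
have jj' : (j' + j = 2 ^ r * j)%N by rewrite /j' -mulSnr prednK ?expn_gt0.
have j'_cls : pow_class8 j'.
  have j2 : (j %% 2 = 1)%N by rewrite modn2 j_odd.
  have r_eq : (2 ^ r = 8 * 2 ^ (r - 3))%N by rewrite -[8%N]/(2 ^ 3)%N -expnD subnKC.
  move: j_ncls jj' j2; rewrite /pow_class8 r_eq -mulnA; move: (2 ^ (r - 3) * j)%N => x.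
  by case: p_mod8 => ->; lia.
have [a p_a] := pow_congr_mod2X r_ge3 j'_cls; exists a.
by rewrite -modnDml p_a modnDml jj' modnMr mod0n.
Qed.

End PowersModTwoPower.

(** * The quadratic character *)

Section Squares.

Variable F : finFieldType.

Definition nonzeros : {set F} := [set x | x != 0].
Definition nz_squares : {set F} := [set x | (x != 0) && [exists y, y ^+ 2 == x]].

Lemma card_nonzero_le_squares : (#|nonzeros| <= 2 * #|nz_squares|)%N.
Proof.
rewrite -sum1_card (partition_big (fun y : F => y ^+ 2) (mem nz_squares)); last first.
  by move=> y; rewrite !inE => y_neq0; rewrite expf_neq0 //=; apply/existsP; exists y.
rewrite mulnC -sum_nat_const; apply: leq_sum => x.
rewrite -[mem nz_squares x]/(x \in nz_squares) inE => /andP[_ /existsP[z /eqP z2]].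
rewrite sum1dep_card; apply: (@leq_trans #|[set z; - z]|); last first.
  by rewrite cards2; case: (_ != _).
apply/subset_leq_card/subsetP => y; rewrite !inE -z2 => /andP[_ /eqP].
by move/eqP; rewrite -subr_eq0 subr_sqr mulf_eq0 subr_eq0 addr_eq0.
Qed.

Lemma nonsquare_mul_square (x0 x : F) :
  x0 != 0 -> ~~ [exists y, y ^+ 2 == x0] -> x != 0 -> ~~ [exists y, y ^+ 2 == x] ->
  exists2 s, x = x0 * s & s \in nz_squares.
Proof.
move=> x0_neq0 x0_nsq x_neq0 x_nsq.
set S := nz_squares; set x0S := [set x0 * s | s in S].
have x0S_nz : x0S \subset nonzeros.
  by apply/subsetP => y /imsetP[s]; rewrite !inE => /andP[s_neq0 _] ->; rewrite mulf_neq0.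
have disj : [disjoint S & x0S].
  apply/pred0P => y /=; apply/negbTE/negP => /andP[].
  rewrite inE => /andP[_ /existsP[u /eqP u2]] /imsetP[s].
  rewrite inE => /andP[s_neq0 /existsP[v /eqP v2]] y_eq.
  have v_neq0 : v != 0 by apply: contraNneq s_neq0 => v0; rewrite -v2 v0 expr0n.
  move/negP: x0_nsq; apply; apply/existsP; exists (u / v).
  by rewrite expr_div_n u2 v2 y_eq mulfK.
have cover : S :|: x0S = nonzeros.
  apply/eqP; rewrite eqEcard subUset x0S_nz andbT; apply/andP; split.
    by apply/subsetP => y; rewrite !inE => /andP[].
  rewrite cardsU (disjoint_setI0 disj) cards0 subn0 card_imset; last exact: mulfI.
  by rewrite addnn -mul2n card_nonzero_le_squares.
have : x \in S :|: x0S by rewrite cover inE.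
rewrite inE /S inE x_neq0 (negbTE x_nsq) /= => /imsetP[s s_sq ->]; by exists s.
Qed.

End Squares.

Section QuadraticCharacter.

Variables (F : finFieldType) (m : nat) (lam : F -> algC).
Hypotheses (lam_order : mchar_order lam (2 ^ m)) (m_gt0 : (0 < m)%N).

Lemma lam_sqr_pow_half y : y ^+ 2 != 0 -> lam (y ^+ 2) ^+ (2 ^ (m - 1)) = 1.
Proof.
rewrite expf_eq0 /= => y_neq0; rewrite (mcharX _ _ (mchar_order_mchar lam_order)).
by rewrite -exprM -expnS subn1 prednK // mchar_order_unity.
Qed.

Lemma mchar_pow_half_quad : mchar_pow lam (2 ^ (m - 1)) =1 @quad_char F.
Proof.
move=> x; rewrite /mchar_pow /quad_char; case: ifP => // /negbT x_neq0.
case: ifP => [/existsP[y /eqP y2] | /negbT x_nsq]; first by rewrite -y2 lam_sqr_pow_half // y2.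
have chi_x : lam x ^+ (2 ^ (m - 1)) != 1.
  have [z z_neq0] : exists2 z, z != 0 & lam z ^+ (2 ^ (m - 1)) != 1.
    case: lam_order => _ _ _ /(_ (2 ^ (m - 1))%N); apply.
    by rewrite expn_gt0 /= ltn_exp2l // subn1 prednK.
  apply: contraNneq => chi_x.
  have [/existsP[y /eqP y2] | z_nsq] := boolP [exists y, y ^+ 2 == z].
    by rewrite -y2 lam_sqr_pow_half // y2.
  have [s -> ] := nonsquare_mul_square x_neq0 x_nsq z_neq0 z_nsq.
  rewrite inE => /andP[s_neq0 /existsP[y /eqP y2]].
  have [_ _ lamM] := mchar_order_mchar lam_order.
  by rewrite lamM exprMn chi_x -y2 lam_sqr_pow_half ?mul1r // y2.
have : (lam x ^+ (2 ^ (m - 1))) ^+ 2 = 1.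
  by rewrite -exprM -expnSr subn1 prednK // mchar_order_unity.
by move/eqP; rewrite sqrf_eq1 (negbTE chi_x) => /eqP.
Qed.

End QuadraticCharacter.

(** * Evaluation of W *)

Lemma natr_pow2_pred (R : pzSemiRingType) r : (3 <= r)%N ->
  (2 ^ (r - 2))%:R = 2 * (2 ^ (r - 3))%:R :> R.
Proof. by move=> r_ge3; rewrite -natrM -expnS subnSK. Qed.

Section WsumEvaluation.

Variables (F : finFieldType) (p s m : nat) (lam : F -> algC) (t : nat) (c0 : int).
Hypotheses (cardF : #|F| = (p ^ s)%N) (p_gt0 : (0 < p)%N).
Hypotheses (p_mod8 : (p %% 8 = 3 \/ p %% 8 = 5)%N) (lam_order : mchar_order lam (2 ^ m)).
Hypothesis c0_odd : odd `|c0|.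

Local Notation W r := (Wsum p s m lam r t c0).
Local Notation Glam r := (gauss p s (mchar_pow lam (2 ^ (m - r)))).
Local Notation Gbar r := (gauss p s (mchar_pow (mchar_conj lam) (2 ^ (m - r)))).
Local Notation u r := ((zeta (2 ^ (m - t)) ^+ (2 ^ (m - r))) ^ c0).
Local Notation octave r :=
  (if (p %% 8 == 3)%N then Glam r * (u r + u r ^+ 3) + Gbar r * (u r ^+ 5 + u r ^+ 7)
   else Glam r * (u r + u r ^+ 5) + Gbar r * (u r ^+ 3 + u r ^+ 7)).

Lemma gauss_odd_mul r j : (3 <= r <= m)%N -> odd j ->
  gauss p s (mchar_pow lam (2 ^ (m - r) * j)) = if pow_class8 p j then Glam r else Gbar r.
Proof.
case/andP=> r_ge3 r_le_m j_odd.
have N_eq : (2 ^ m = 2 ^ (m - r) * 2 ^ r)%N by rewrite -expnD subnK.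
case: ifP => [j_cls | /negbT j_ncls].
  have [a p_a] := pow_congr_mod2X p_mod8 r_ge3 j_cls.
  rewrite -[RHS](gauss_pow_frobeniusX cardF p_gt0 _ a (mchar_order_mchar lam_order)).
  by apply: (gauss_pow_modn _ _ lam_order); rewrite N_eq -!muln_modr p_a.
have [a p_a] := pow_congr_opp_mod2X p_mod8 r_ge3 j_odd j_ncls.
rewrite -[RHS](gauss_pow_frobeniusX cardF p_gt0 _ a (mchar_conjP (mchar_order_mchar lam_order))).
by apply: (gauss_pow_conj _ _ lam_order); rewrite N_eq -mulnDr -muln_modr addnC p_a !mod0n muln0.
Qed.

Lemma Wsum_powers r : W r =
  \sum_(j < 2 ^ r | odd j) gauss p s (mchar_pow lam (2 ^ (m - r) * j)) * u r ^+ j.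
Proof. by apply: eq_bigr => j _; rewrite exprz_natMz. Qed.

Lemma u_le r : (r <= t)%N -> u r = 1.
Proof. by move=> le_rt; rewrite zeta_pow2_eq1 ?exp1rz ?leq_sub2l. Qed.

Lemma u_add r k : (r <= m)%N -> r = (t + k.+1)%N -> u r = zeta (2 ^ k.+1) ^ c0.
Proof.
move=> le_rm r_eq; have lt_tr : (t < r)%N by rewrite r_eq addnS ltnS leq_addr.
have e : (r - t + (m - r) = m - t)%N by rewrite addnC addnBA ?subnK // ltnW.
by rewrite -{1}e zeta_pow2 r_eq addKn.
Qed.

Lemma Wsum_octaves r : (3 <= r <= m)%N ->
  W r = (\sum_(l < 2 ^ (r - 3)) (u r ^+ 8) ^+ l) * octave r.
Proof.
move=> r_bnd; rewrite Wsum_powers big_mkcond /=.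
have -> : (2 ^ r = 2 ^ (r - 3) * 8)%N.
  by rewrite -[8%N]/(2 ^ 3)%N -expnD subnK //; case/andP: r_bnd.
pose a k := if odd k then (if pow_class8 p k then Glam r else Gbar r) else 0.
rewrite (eq_bigr (fun j : 'I__ => a (j %% 8)%N * u r ^+ j)); last first.
  move=> j _; rewrite /a odd_mod //; case: ifP => [j_odd | _]; last by rewrite mul0r.
  by rewrite gauss_odd_mul // /pow_class8 modn_mod.
rewrite sum_expr_mod; congr (_ * _).
rewrite !big_ord_recr big_ord0 /= /a /pow_class8 /=.
by case: p_mod8 => ->; rewrite /= expr1; ring.
Qed.

Local Notation S r := (Glam r + Gbar r).
Local Notation D r := (Glam r - Gbar r).

Lemma Wsum_octaves_unity r : (3 <= r <= m)%N -> u r ^+ 8 = 1 ->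
  W r = (2 ^ (r - 3))%:R * octave r.
Proof. by move=> r_bnd u8; rewrite Wsum_octaves // sumr_expr1. Qed.

Lemma Wsum_le r : (3 <= r <= m)%N -> (r <= t)%N -> W r = (2 ^ (r - 2))%:R * S r.
Proof.
move=> r_bnd le_rt; rewrite Wsum_octaves_unity // u_le ?expr1n //.
by rewrite natr_pow2_pred; [case: ifP => _; ring | case/andP: r_bnd].
Qed.

Lemma Wsum_succ r : (3 <= r <= m)%N -> r = t.+1 -> W r = - ((2 ^ (r - 2))%:R * S r).
Proof.
move=> r_bnd r_eq; have u_neg1 : u r = -1.
  by rewrite (@u_add r 0) ?zeta2 ?expN1z_odd ?addn1 //; case/andP: r_bnd.
rewrite Wsum_octaves_unity // u_neg1 ?natr_pow2_pred; last 2 first.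
- by case/andP: r_bnd.
- by rewrite -signr_odd.
by case: ifP => _; ring.
Qed.

Lemma Wsum_add2 r : (3 <= r <= m)%N -> r = (t + 2)%N ->
  W r = if (p %% 8 == 5)%N then (2 ^ (r - 2))%:R * 'i ^ c0 * D r else 0.
Proof.
move=> r_bnd r_eq; have u_eq : u r = zeta 4 ^ c0.
  by rewrite (@u_add r 1) //; case/andP: r_bnd.
have [u3 u5 u7 u8] : [/\ u r ^+ 3 = - u r, u r ^+ 5 = u r, u r ^+ 7 = - u r & u r ^+ 8 = 1].
  by apply: expr_sqr_neg1; rewrite u_eq; apply: (@zeta_pow2_odd 1).
rewrite zeta4 in u_eq.
rewrite Wsum_octaves_unity // u3 u5 u7 u_eq natr_pow2_pred; last by case/andP: r_bnd.
by case: p_mod8 => ->; rewrite /=; ring.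
Qed.

Lemma Wsum_add3 r : (3 <= r <= m)%N -> r = (t + 3)%N ->
  W r = if (p %% 8 == 3)%N then (2 ^ (r - 3))%:R * (zeta 8 ^ c0 + (zeta 8 ^ c0) ^+ 3) * D r
        else 0.
Proof.
move=> r_bnd r_eq; have u_eq : u r = zeta 8 ^ c0.
  by rewrite (@u_add r 2) //; case/andP: r_bnd.
have [u5 u7 u8] : [/\ u r ^+ 5 = - u r, u r ^+ 7 = - u r ^+ 3 & u r ^+ 8 = 1].
  by apply: expr_fourth_neg1; rewrite u_eq; apply: (@zeta_pow2_odd 2).
rewrite Wsum_octaves_unity // u5 u7 u_eq.
by case: p_mod8 => ->; rewrite /=; ring.
Qed.

Lemma Wsum_far r : (3 <= r <= m)%N -> (t + 4 <= r)%N -> W r = 0.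
Proof.
move=> r_bnd le_t4r; set k := (r - t).-1.
have lt_tr : (t < r)%N by move: le_t4r; clear; lia.
have r_eq : r = (t + k.+1)%N by rewrite prednK ?subn_gt0 // subnKC // ltnW.
have u_eq : u r = zeta (2 ^ k.+1) ^ c0 by rewrite (u_add _ r_eq) //; case/andP: r_bnd.
rewrite Wsum_octaves // sumr_expr_eq0 ?mul0r //.
- rewrite u_eq; apply/eqP => v8.
  have k_ge3 : (3 <= k)%N by move: le_t4r; rewrite r_eq leq_add2l ltnS.
  have : (-1 : algC) = 1.
    have e : (2 ^ k = 8 * 2 ^ (k - 3))%N by rewrite -[8%N]/(2 ^ 3)%N -expnD subnKC.
    by rewrite -(@zeta_pow2_odd k c0) // e exprM v8 expr1n.
  by move/eqP; rewrite lt_eqF // (lt_trans (ltrN10 _) ltr01).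
- have e : (8 * 2 ^ (r - 3) = 2 ^ r)%N.
    by rewrite -[8%N]/(2 ^ 3)%N -expnD subnKC //; case/andP: r_bnd.
  rewrite u_eq -(exprM (zeta (2 ^ k.+1) ^ c0)) exprzACn e.
  by rewrite zeta_pow2_eq1 ?exp1rz // r_eq leq_addl.
Qed.

Lemma Wsum_one : (1 <= m)%N ->
  W 1 = if t == 0%N then - gauss p s (@quad_char F) else gauss p s (@quad_char F).
Proof.
move=> m_gt0; rewrite Wsum_powers big_mkcond !big_ord_recr big_ord0 /= !add0r muln1.
rewrite (eq_gauss _ _ (mchar_pow_half_quad lam_order m_gt0)) expr1.
have [t0 | t_gt0] := eqVneq t 0%N.
  by rewrite (@u_add 1 0) ?t0 // zeta2 expN1z_odd // mulrN1.
by rewrite u_le ?mulr1 // lt0n.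
Qed.

Lemma gauss_three_conj : (2 <= m)%N -> gauss p s (mchar_pow lam (2 ^ (m - 2) * 3)) = Gbar 2.
Proof.
move=> m_ge2; apply: (gauss_pow_conj _ _ lam_order).
by rewrite -mulnSr -[4%N]/(2 ^ 2)%N -expnD subnK // modnn mod0n.
Qed.

Lemma Wsum_two : (2 <= m)%N ->
  W 2 = if (2 <= t)%N then S 2 else if t == 1%N then - S 2 else 'i ^ c0 * D 2.
Proof.
move=> m_ge2; rewrite Wsum_powers big_mkcond !big_ord_recr big_ord0 /=.
rewrite !add0r addr0 muln1 gauss_three_conj // expr1.
have [le2t | ] := leqP 2 t; first by rewrite u_le // expr1n !mulr1.
rewrite ltnS leq_eqVlt ltnS leqn0 => /orP[/eqP t1 | /eqP t0].
  by rewrite (@u_add 2 0) ?t1 // zeta2 expN1z_odd //=; ring.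
rewrite (@u_add 2 1) ?t0 // zeta4.
have [i3 _ _ _] := expr_sqr_neg1 (@zeta_pow2_odd 1 c0 c0_odd).
by rewrite -zeta4 i3; ring.
Qed.

Lemma Wsum_ge3 r : (3 <= r <= m)%N ->
  W r = if (r <= t)%N then (2 ^ (r - 2))%:R * S r
        else if r == t.+1 then - ((2 ^ (r - 2))%:R * S r)
        else if (r == t + 2)%N && (p %% 8 == 5)%N then (2 ^ (r - 2))%:R * 'i ^ c0 * D r
        else if [&& r == t + 3, p %% 8 == 3 & (c0 %% 8)%Z \in [:: 1%Z; 3%Z]]%N then
          (2 ^ (r - 3))%:R * 'i * sqrtC 2 * D r
        else if [&& r == t + 3, p %% 8 == 3 & (c0 %% 8)%Z \in [:: 5%Z; 7%Z]]%N then
          - ((2 ^ (r - 3))%:R * 'i * sqrtC 2 * D r)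
        else 0.
Proof.
move=> r_bnd; have [le_rt | lt_tr] := leqP r t; first exact: Wsum_le.
have [r_eq | r_ne1] := eqVneq r t.+1; first exact: Wsum_succ.
have [r_eq | r_ne2] := eqVneq r (t + 2).
  by rewrite Wsum_add2 // r_eq eqn_add2l /=; case: ifP.
have [r_eq | r_ne3] := eqVneq r (t + 3); last first.
  rewrite Wsum_far //; move: lt_tr r_ne1 r_ne2 r_ne3; clear; lia.
rewrite Wsum_add3 // zeta8_odd_add3 //=.
have c8 : ((c0 %% 8)%Z \in [:: 5%Z; 7%Z]) = ((c0 %% 8)%Z \notin [:: 1%Z; 3%Z]).
  have c2 : (`|c0| %% 2 = 1)%N by rewrite modn2 c0_odd.
  by rewrite !inE; move: c2; clear; lia.
by rewrite c8; case: (p %% 8 == 3)%N; case: ((c0 %% 8)%Z \in _) => /=; ring.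
Qed.

End WsumEvaluation.

Theorem lemma14 (F : finFieldType) (p s m : nat) (lam : F -> algC) :
  prime p -> p \in [pchar F] -> #|F| = (p ^ s)%N ->
  (p %% 8 == 3 \/ p %% 8 == 5)%N ->
  (2 ^ m %| p ^ s - 1)%N ->
  (p %% 8 = 3 -> 3 <= m)%N ->
  (p %% 8 = 5 -> 2 <= m)%N ->
  mchar_order lam (2 ^ m) ->
  forall (t : nat) (c0 : int), (t <= m)%N -> odd `|c0|%N ->
  let G := gauss p s in
  let W r := Wsum p s m lam r t c0 in
  let S r := G (mchar_pow lam (2 ^ (m - r))) + G (mchar_pow (mchar_conj lam) (2 ^ (m - r))) in
  let D r := G (mchar_pow lam (2 ^ (m - r))) - G (mchar_pow (mchar_conj lam) (2 ^ (m - r))) in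
  [/\ W 1%N = (if t == 0%N then - G (@quad_char F) else G (@quad_char F)),
      W 2%N = (if (2 <= t)%N then S 2%N
               else if t == 1%N then - S 2%N
               else 'i ^ c0 * D 2%N) &
      forall r : nat, (3 <= r <= m)%N ->
        W r = (if (r <= t)%N then (2 ^ (r - 2))%:R * S r
               else if r == t.+1 then - ((2 ^ (r - 2))%:R * S r)
               else if (r == t + 2)%N && (p %% 8 == 5)%N then
                 (2 ^ (r - 2))%:R * 'i ^ c0 * D r
               else if [&& r == t + 3, p %% 8 == 3 & (c0 %% 8)%Z \in [:: 1%Z; 3%Z]]%N then
                 (2 ^ (r - 3))%:R * 'i * sqrtC 2 * D r
               else if [&& r == t + 3, p %% 8 == 3 & (c0 %% 8)%Z \in [:: 5%Z; 7%Z]]%N then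
                 - ((2 ^ (r - 3))%:R * 'i * sqrtC 2 * D r)
               else 0)].
Proof.
move=> p_prime _ cardF p_mod8 _ m3 m5 lam_order t c0 _ c0_odd G W S D.
have p_gt0 := prime_gt0 p_prime.
have {}p_mod8 : (p %% 8 = 3 \/ p %% 8 = 5)%N by case: p_mod8 => /eqP; [left | right].
have m_ge2 : (2 <= m)%N by case: p_mod8 => [/m3/ltnW | /m5].
have m_gt0 : (0 < m)%N := ltnW m_ge2.
split; [exact: Wsum_one | exact: Wsum_two | move=> r r_bnd; exact: Wsum_ge3].
Qed.
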